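(* Let $S=(G,P,\Lambda,I)$ be a completely simple semigroup with non-singular sandwich matrix $P$, and let $\mathbf 1=(1,1_G,1)$. Then every algebraic set $Y\subseteq S^n$ over $S$ (in the language $\mathcal{L}_S$) is the solution set of a system of the form $\{t_i(X)=\mathbf{1}\mid i\in\mathcal{I}\}$, where $X=(x_1,\dots,x_n)$ and each $t_i$ is an $\mathcal{L}_S$-term.
   Context: Rees representation: a completely simple semigroup $S=(G,P,\Lambda,I)$ is given by a group $G$, index sets $\Lambda,I$ (each containing an element $1$), and a matrix $P=(p_{i\lambda})_{i\in I,\lambda\in\Lambda}$ over $G$ normalised so that $p_{1\lambda}=p_{i1}=1_G$; elements are triples $(\lambda,g,i)$ with product $(\lambda,g,i)(\mu,h,j)=(\lambda,gp_{i\mu}h,j)$ and inversion $(\lambda,g,i)^{-1}=(\lambda,p_{i\lambda}^{-1}g^{-1}p_{i\lambda}^{-1},i)$. $P$ is non-singular if it has no two equal rows and no two equal columns. The language $\mathcal{L}_S$ is $\{\cdot,{}^{-1}\}$ plus a constant for each element of $S$; terms are built from variables and constants using products and ${}^{-1}$; an algebraic set is the solution set of a system (set) of equations $t(X)=s(X)$ between terms. *)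

From mathcomp Require Import all_boot.
Set Implicit Arguments. Unset Strict Implicit. Unset Printing Implicit Defensive.

Record group := Group {
  gcar :> Type;
  gmul : gcar -> gcar -> gcar;
  ginv : gcar -> gcar;
  gone : gcar;
  gmulA : forall x y z, gmul x (gmul y z) = gmul (gmul x y) z;
  gmul1 : forall x, gmul gone x = x;
  gmulV : forall x, gmul (ginv x) x = gone }.

Record rees_data := Rees {
  rG : group;
  rLam : Type;
  rI : Type;
  lam1 : rLam;
  i1 : rI;
  rP : rI -> rLam -> rG;
  rP_row1 : forall l, rP i1 l = gone rG;
  rP_col1 : forall i, rP i lam1 = gone rG }.

Definition nonsingular (R : rees_data) : Prop :=
  (forall i j : rI R, (forall l, rP i l = rP j l) -> i = j) /\
  (forall l m : rLam R, (forall i, rP i l = rP i m) -> l = m).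

Definition elt (R : rees_data) : Type := (rLam R * rG R * rI R)%type.

Definition smul (R : rees_data) (a b : elt R) : elt R :=
  let: (l, g, i) := a in let: (m, h, j) := b in
  (l, gmul g (gmul (rP i m) h), j).

Definition sinv (R : rees_data) (a : elt R) : elt R :=
  let: (l, g, i) := a in
  (l, gmul (ginv (rP i l)) (gmul (ginv g) (ginv (rP i l))), i).

Definition sone (R : rees_data) : elt R := (lam1 R, gone (rG R), i1 R).

Inductive term (R : rees_data) (n : nat) : Type :=
  | TVar of 'I_n
  | TConst of elt R
  | TMul of term R n & term R n
  | TInv of term R n.

Fixpoint eval (R : rees_data) (n : nat) (t : term R n) (X : 'I_n -> elt R) : elt R :=
  match t with
  | TVar k => X k
  | TConst c => c
  | TMul u v => smul (eval u X) (eval v X)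
  | TInv u => sinv (eval u X)
  end.

Definition solutions (R : rees_data) (n : nat) (E : term R n * term R n -> Prop)
  : ('I_n -> elt R) -> Prop :=
  fun X => forall e, E e -> eval e.1 X = eval e.2 X.

Definition algebraic_set (R : rees_data) (n : nat) (Y : ('I_n -> elt R) -> Prop) : Prop :=
  exists E, forall X, Y X <-> solutions E X.

From mathcomp Require Import all_boot.
Set Implicit Arguments. Unset Strict Implicit.

(* Sandwiching with the idempotent 1 = (1, 1_G, 1) sends (l, g, i) to (1, g, 1), so
   1 t 1 (1 s 1)^-1 = 1 expresses equality of the group coordinates of t and s.
   The index coordinates are recovered from the group coordinates of (1, 1_G, k) t and
   t (m, 1_G, 1), which are p_{k l} g and g p_{i m}: since no two rows and no two
   columns of P coincide, these determine l and i.  Hence each equation t = s is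
   equivalent to a family of equations of the form u = 1. *)

Section GroupFacts.
Variable G : group.

Lemma gmulrV (x : G) : gmul x (ginv x) = gone G.
Proof.
rewrite -[gmul x _](@gmul1 G) -{1}(@gmulV G (ginv x)) -gmulA (@gmulA G (ginv x)).
by rewrite gmulV gmul1 gmulV.
Qed.

Lemma gmulr1 (x : G) : gmul x (gone G) = x.
Proof. by rewrite -(@gmulV G x) gmulA gmulrV gmul1. Qed.

Lemma ginv1 : ginv (gone G) = gone G.
Proof. by rewrite -[ginv _]gmulr1 gmulV. Qed.

Lemma gmulI (a : G) : injective (gmul a).
Proof. by move=> b c h; rewrite -(@gmul1 G b) -(@gmul1 G c) -(@gmulV G a) -!gmulA h. Qed.

Lemma gmulIr (a : G) : injective (fun b : G => gmul b a).
Proof. by move=> b c /= h; rewrite -(gmulr1 b) -(gmulr1 c) -(gmulrV a) !gmulA h. Qed.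

Lemma gdiv_eq1 (a b : G) : gmul a (ginv b) = gone G <-> a = b.
Proof.
split=> [h | ->]; last exact: gmulrV.
by rewrite -(gmulr1 a) -(@gmulV G b) gmulA h gmul1.
Qed.

End GroupFacts.

Section ReesSemigroup.
Variable R : rees_data.

Definition gcoord (a : elt R) : rG R := a.1.2.

Definition lunit (k : rI R) : elt R := (lam1 R, gone (rG R), k).
Definition runit (m : rLam R) : elt R := (m, gone (rG R), i1 R).

Lemma sandwich_sone (a : elt R) :
  smul (smul (sone R) a) (sone R) = (lam1 R, gcoord a, i1 R).
Proof. by case: a => [[l g] i]; rewrite /= rP_row1 rP_col1 !gmul1 gmulr1. Qed.

Lemma gcoord_lunit_mul k (a : elt R) :
  gcoord (smul (lunit k) a) = gmul (rP k a.1.1) (gcoord a).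
Proof. by case: a => [[l g] i]; rewrite /= gmul1. Qed.

Lemma gcoord_mul_runit (a : elt R) m :
  gcoord (smul a (runit m)) = gmul (gcoord a) (rP a.2 m).
Proof. by case: a => [[l g] i]; rewrite /= gmulr1. Qed.

Lemma elt_eq_gcoords (hP : nonsingular R) (a b : elt R) :
  gcoord a = gcoord b ->
  (forall k, gcoord (smul (lunit k) a) = gcoord (smul (lunit k) b)) ->
  (forall m, gcoord (smul a (runit m)) = gcoord (smul b (runit m))) ->
  a = b.
Proof.
move=> eq_g eq_left eq_right.
have eq_l : a.1.1 = b.1.1.
  apply: hP.2 => k; apply: (@gmulIr _ (gcoord b)).
  by have := eq_left k; rewrite !gcoord_lunit_mul eq_g.
have eq_i : a.2 = b.2.
  apply: hP.1 => m; apply: (@gmulI _ (gcoord b)).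
  by have := eq_right m; rewrite !gcoord_mul_runit eq_g.
by move: eq_g eq_l eq_i; clear; case: a b => [[l g] i] [[l' g'] i'] /=; rewrite /gcoord /= => -> -> ->.
Qed.

End ReesSemigroup.

Section Terms.
Variables (R : rees_data) (n : nat).

Definition tsandwich (u : term R n) : term R n :=
  TMul (TMul (TConst n (sone R)) u) (TConst n (sone R)).

Definition tgdiff (u v : term R n) : term R n :=
  TMul (tsandwich u) (TInv (tsandwich v)).

Lemma eval_tgdiff_sone u v X :
  eval (tgdiff u v) X = sone R <-> gcoord (eval u X) = gcoord (eval v X).
Proof.
rewrite [eval _ X]/= !sandwich_sone /= rP_row1 ginv1 !gmul1 gmulr1.
split=> [[/gdiv_eq1 //] | ->]; by rewrite gmulrV.
Qed.

Definition tlunit k (u : term R n) : term R n := TMul (TConst n (lunit k)) u.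
Definition trunit m (u : term R n) : term R n := TMul u (TConst n (runit m)).

Inductive unit_equation (e : term R n * term R n) : term R n -> Prop :=
  | UnitEqG : unit_equation e (tgdiff e.1 e.2)
  | UnitEqL k : unit_equation e (tgdiff (tlunit k e.1) (tlunit k e.2))
  | UnitEqR m : unit_equation e (tgdiff (trunit m e.1) (trunit m e.2)).

Lemma unit_equationsP (hP : nonsingular R) e X :
  (forall t, unit_equation e t -> eval t X = sone R) <-> eval e.1 X = eval e.2 X.
Proof.
split=> [H | eq_e t].
  apply: elt_eq_gcoords => // [|k|m].
  - exact/eval_tgdiff_sone/H/UnitEqG.
  - exact/(eval_tgdiff_sone (tlunit k e.1) (tlunit k e.2))/H/UnitEqL.
  - exact/(eval_tgdiff_sone (trunit m e.1) (trunit m e.2))/H/UnitEqR.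
by case=> [|k|m]; apply/eval_tgdiff_sone; rewrite /= eq_e.
Qed.

End Terms.

Theorem mainTheorem10 (R : rees_data) (hP : nonsingular R) (n : nat)
  (Y : ('I_n -> elt R) -> Prop) :
  algebraic_set Y ->
  exists T : term R n -> Prop,
    forall X, Y X <-> (forall t, T t -> eval t X = sone R).
Proof.
case=> E defY; exists (fun t => exists2 e, E e & unit_equation e t) => X.
apply: iff_trans (defY X) _; split=> [H t [e Ee] | H e Ee].
  by move: t; apply/unit_equationsP/H.
by apply/(unit_equationsP hP) => t te; apply: H; exists e.
Qed.
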